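(* Let $0<r\le 1/2$, $0\le\rho\le 1$, and let $\alpha$ satisfy $0\le\alpha<r$, with $\alpha$ the asymptotic red edge fraction of the Biased Preferential Attachment Model described in the context. Define $$K_B=\frac12\left(\frac{r\rho}{\alpha+\rho(1-\alpha)}+\frac{1-r}{\alpha\rho+1-\alpha}\right),\qquad \beta_B=1+\frac{1}{K_B}.$$ Then $\beta_B>2$.
   Context: In the BPAM, nodes arrive sequentially and are labeled red with probability $r$ (minority, $0<r\le1/2$) or blue with probability $1-r$. Each new node attaches by preferential attachment, with a cross-label edge accepted only with probability $\rho\in[0,1]$ (retrying otherwise), and every node has outdegree $d$. $\alpha$ denotes the limit as $N\to\infty$ of the expected fraction of the total degree $2Nd$ belonging to red nodes. It satisfies the power inequality $\alpha<r$. $\beta_B$ is the power-law exponent of the blue community's asymptotic degree distribution, i.e. the number of blue nodes of degree at least $k$ scales as $k^{-\beta_B}$. *)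

From mathcomp Require Import all_boot all_order all_algebra.
Set Implicit Arguments. Unset Strict Implicit. Unset Printing Implicit Defensive.
Import Order.TTheory GRing.Theory Num.Theory.
Local Open Scope ring_scope.

Definition K_B (R : realFieldType) (r rho alpha : R) : R :=
  2^-1 * (r * rho / (alpha + rho * (1 - alpha))
          + (1 - r) / (alpha * rho + 1 - alpha)).

(* beta_B = 1 + 1 / K_B : power-law exponent of the blue community *)
Definition beta_B (R : realFieldType) (r rho alpha : R) : R :=
  1 + (K_B r rho alpha)^-1.

From mathcomp Require Import all_boot all_order all_algebra.
From mathcomp Require Import lra.
Import Order.TTheory GRing.Theory Num.Theory.
Local Open Scope ring_scope.

(* beta_B > 2 amounts to 0 < K_B < 1.  Since alpha < r the blue denominator
   alpha rho + 1 - alpha is at least 1 - alpha > 1 - r, so the blue term lies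
   in (0, 1); the red denominator alpha + rho (1 - alpha) is at least rho, so
   the red term lies in [0, r] with r <= 1/2.  Hence K_B < (1/2 + 1) / 2 < 1. *)

Section Ratios.
Variable R : realFieldType.
Implicit Types c x y : R.

(* For y = 0 this still holds because then x = 0 and x / 0 = 0. *)
Lemma mulr_divr_le_ge0 c x y : 0 <= c -> 0 <= x -> x <= y -> c * x / y <= c.
Proof.
move=> c0 x0 xy; have [y0|y_gt0] := leP y 0.
  by rewrite [x](@le_anti _ _ x 0) ?mulr0 ?mul0r // x0 (le_trans xy y0).
by rewrite -mulrA ler_piMr // ler_pdivrMr // mul1r.
Qed.

Lemma divr_lt1 x y : 0 < y -> x < y -> x / y < 1.
Proof. by move=> y0 xy; rewrite ltr_pdivrMr // mul1r. Qed.

Lemma one_addr_inv_gt2 x : 0 < x -> x < 1 -> 2 < 1 + x^-1.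
Proof.
move=> x0 x1; suff : 1 < x^-1 by lra.
by rewrite -[1](@invr1 R) ltf_pV2 ?posrE //; lra.
Qed.

End Ratios.

Lemma red_term_ge0 {R : realFieldType} {r rho alpha : R} :
  0 <= r -> 0 <= rho -> 0 <= alpha -> alpha <= 1 ->
  0 <= r * rho / (alpha + rho * (1 - alpha)).
Proof.
by move=> *; rewrite divr_ge0 ?mulr_ge0 ?addr_ge0 ?mulr_ge0 ?subr_ge0.
Qed.

Lemma red_term_le {R : realFieldType} {r rho alpha : R} :
  0 <= r -> 0 <= rho -> rho <= 1 -> 0 <= alpha ->
  r * rho / (alpha + rho * (1 - alpha)) <= r.
Proof. by move=> *; apply: mulr_divr_le_ge0 => //; nra. Qed.

Lemma blue_term_gt0 {R : realFieldType} {r rho alpha : R} :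
  0 <= rho -> 0 <= alpha -> alpha < r -> r < 1 ->
  0 < (1 - r) / (alpha * rho + 1 - alpha).
Proof. by move=> *; apply: divr_gt0; nra. Qed.

Lemma blue_term_lt1 {R : realFieldType} {r rho alpha : R} :
  0 <= rho -> 0 <= alpha -> alpha < r -> r < 1 ->
  (1 - r) / (alpha * rho + 1 - alpha) < 1.
Proof. by move=> *; apply: divr_lt1; nra. Qed.

Theorem proposition4 (R : realFieldType) (r rho alpha : R) :
  0 < r -> r <= 2^-1 -> 0 <= rho -> rho <= 1 ->
  0 <= alpha -> alpha < r ->
  2 < beta_B r rho alpha.
Proof.
move=> r_gt0 r_le_half rho_ge0 rho_le1 alpha_ge0 alpha_lt_r.
have [r_ge0 r_lt1 alpha_le1] : [/\ 0 <= r, r < 1 & alpha <= 1] by split; lra.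
have := red_term_ge0 r_ge0 rho_ge0 alpha_ge0 alpha_le1.
have := red_term_le r_ge0 rho_ge0 rho_le1 alpha_ge0.
have := blue_term_gt0 rho_ge0 alpha_ge0 alpha_lt_r r_lt1.
have := blue_term_lt1 rho_ge0 alpha_ge0 alpha_lt_r r_lt1.
rewrite /beta_B /K_B => blue_lt1 blue_gt0 red_le red_ge0.
by apply: one_addr_inv_gt2; lra.
Qed.
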